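(* Let $P(x)\in\mathbb{Z}[x]$ be an irreducible monic polynomial of degree $g\geq2$ all of whose roots are either real or of modulus $1$, with at least one root of modulus $1$. Let $\gamma$ be a root of $P(x)$ with $|\gamma|=1$, let $F=\mathbb{Q}(\gamma+\gamma^{-1})$ (a totally real number field), and let $a=(\gamma-\gamma^{-1})^2\in\mathcal{O}_F$. Let $p$ be a prime number such that the quaternion algebra $B=\left(\frac{a,p}{F}\right)$ is a division algebra. Then there exists a positive anti-involution on $B$ over $\mathbb{Q}$.
   Context: For a field $F$ of characteristic $\neq2$ and $a,b\in F^\times$, $\left(\frac{a,b}{F}\right)$ is the $F$-algebra with basis $1,i,j,ij$ subject to $i^2=a$, $j^2=b$, $ij=-ji$. An anti-involution of a $\mathbb{Q}$-algebra $B$ over $\mathbb{Q}$ is a $\mathbb{Q}$-linear map $\phi\colon B\to B$ with $\phi(1)=1$, $\phi(\phi(x))=x$ and $\phi(xy)=\phi(y)\phi(x)$. It is positive (over $\mathbb{Q}$) if $\mathrm{Tr}(\phi(x)x)>0$ for all nonzero $x\in B$, where $\mathrm{Tr}(c)$ is the trace of left multiplication by $c$ on $B$ viewed as a finite-dimensional $\mathbb{Q}$-vector space. *)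

From HB Require Import structures.
From mathcomp Require Import all_boot all_order all_algebra all_field.
Set Implicit Arguments. Unset Strict Implicit. Unset Printing Implicit Defensive.
Import Order.TTheory GRing.Theory Num.Theory.
Local Open Scope ring_scope.

(* The quaternion algebra (a,b / F) over a field F, realized on F^4 with
   the coordinates w.r.t. the basis 1, i, j, ij.  As a rat-vector space
   (when F is a fieldExtType rat) it carries the product vectType structure. *)
Notation quat F := (F * F * F * F)%type.

Definition qone {F : fieldType} : quat F := (1, 0, 0, 0).

(* i^2 = a, j^2 = b, ij = -ji *)
Definition qmul {F : fieldType} (a b : F) (x y : quat F) : quat F :=
  let: (x0, x1, x2, x3) := x in
  let: (y0, y1, y2, y3) := y in
  (x0 * y0 + a * x1 * y1 + b * x2 * y2 - a * b * x3 * y3,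
   x0 * y1 + x1 * y0 - b * x2 * y3 + b * x3 * y2,
   x0 * y2 + x2 * y0 + a * x1 * y3 - a * x3 * y1,
   x0 * y3 + x3 * y0 + x1 * y2 - x2 * y1).

Definition quat_division {F : fieldType} (a b : F) : Prop :=
  forall x : quat F, x != 0 ->
    exists y : quat F, qmul a b x y = qone /\ qmul a b y x = qone.

(* Tr(c): trace of left multiplication by c on B, viewed as a Q-vector space
   (matrix of the Q-linear map x |-> c x in a Q-basis of B). *)
Definition qtrace {F : fieldExtType rat} (a b : F) (c : quat F) : rat :=
  let e := vbasis (fullv : {vspace quat F}) in
  \tr (lin1_mx (passmx.rVof e \o qmul a b c \o passmx.vecof e)).

Definition anti_involution {F : fieldExtType rat} (a b : F)
    (phi : quat F -> quat F) : Prop :=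
  [/\ linear phi,
      phi qone = qone,
      (forall x, phi (phi x) = x) &
      (forall x y, phi (qmul a b x y) = qmul a b (phi y) (phi x))].

Definition positive_anti_involution {F : fieldExtType rat} (a b : F)
    (phi : quat F -> quat F) : Prop :=
  anti_involution a b phi /\
  (forall x : quat F, x != 0 -> 0 < qtrace a b (qmul a b (phi x) x)).

(* Let d = 1 - p t^2 for some t in F and phi(x) = mu^-1 x' mu, where x' is the
   canonical involution of B and mu = i + t ij, so that mu^2 = a d.  Then phi is an
   anti-involution and Tr(phi(x) x) = 4 Tr_{F/Q}(x0^2 + p x2^2 - (a/d) (y1^2 + p y3^2))
   for coordinates y1, y3 depending linearly on x.  As Tr_{F/Q} is the sum of the
   embeddings of F into C, this is positive as soon as F is totally real and a d is
   totally negative.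
   An embedding of F maps delta = gamma + gamma^-1 to tau + tau^-1 for a root tau of P;
   this is real, since tau is real or on the unit circle, and its square v differs from 4,
   since tau^2 <> 1.  So F is totally real, and for t = s delta with s rational an
   embedding maps a = delta^2 - 4 to v - 4 and d to 1 - p s^2 v.  Taking 1/(p s^2) close
   enough to 4 makes these two of opposite signs for all of the finitely many values v. *)

From HB Require Import structures.
From mathcomp Require Import all_boot all_order all_algebra all_field.
From mathcomp Require Import ring lra.
Import Order.TTheory GRing.Theory Num.Theory.
Local Open Scope ring_scope.

Set Implicit Arguments. Unset Strict Implicit. Unset Printing Implicit Defensive.

Local Notation ratC := (ratr : rat -> algC).

Section CoordinateMatrix.
Variable K : fieldType.
Implicit Types U V W : vectType K.

Definition coordmx U V (h : U -> V) : 'M[K]_(\dim {:U}, \dim {:V}) :=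
  lin1_mx (passmx.rVof (vbasis {:V}) \o h \o passmx.vecof (vbasis {:U})).

Definition vtrace V (h : V -> V) : K := \tr (coordmx h).

Lemma coordmxE U V (h : U -> V) i j :
  coordmx h i j = coord (vbasis {:V}) j (h (vbasis {:U})`_i).
Proof. by rewrite !mxE /= passmx.vecof_delta. Qed.

Lemma eq_coordmx U V (h1 h2 : U -> V) : h1 =1 h2 -> coordmx h1 = coordmx h2.
Proof. by move=> eq_h; apply/matrixP => i j; rewrite !coordmxE eq_h. Qed.

Lemma coordmx_sum V (I : finType) (h : I -> V -> V) :
  coordmx (fun x => \sum_i h i x) = \sum_i coordmx (h i).
Proof.
apply/matrixP => j k; rewrite coordmxE summxE linear_sum.
by apply: eq_bigr => i _; rewrite coordmxE.
Qed.

Lemma eq_vtrace V (h1 h2 : V -> V) : h1 =1 h2 -> vtrace h1 = vtrace h2.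
Proof. by move/eq_coordmx; rewrite /vtrace => ->. Qed.

Lemma vtrace_sum V (I : finType) (h : I -> V -> V) :
  vtrace (fun x => \sum_i h i x) = \sum_i vtrace (h i).
Proof. by rewrite /vtrace coordmx_sum raddf_sum. Qed.

Lemma coordmx_comp U V W (f : U -> V) (g : {linear V -> W}) :
  coordmx (g \o f) = coordmx f *m coordmx g.
Proof.
apply/matrixP => i k; rewrite coordmxE [RHS]mxE /=.
rewrite {1}(coord_vbasis (memvf (f (vbasis {:U})`_i))) !linear_sum.
by apply: eq_bigr => j _; rewrite !coordmxE linearZZ linearZ.
Qed.

Lemma vtrace_comp U V (f : {linear U -> V}) (g : {linear V -> U}) :
  vtrace (g \o f) = vtrace (f \o g).
Proof. by rewrite /vtrace (coordmx_comp f g) (coordmx_comp g f) mxtrace_mulC. Qed.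

End CoordinateMatrix.

Lemma trig_mulmx_diag (R : pzRingType) n (A B : 'M[R]_n) i :
  is_trig_mx A -> is_trig_mx B -> (A *m B) i i = A i i * B i i.
Proof.
move=> /is_trig_mxP trigA /is_trig_mxP trigB.
rewrite mxE (bigD1 i) //= big1 ?addr0 // => j neq_ji.
have [lt_ij | le_ji] := ltnP i j; first by rewrite trigA ?mul0r.
by rewrite trigB ?mulr0 // ltn_neqAle le_ji andbT.
Qed.

Section RegularRepresentation.
Variable F : fieldExtType rat.
Local Notation n := (\dim {:F}).
Local Notation e := (vbasis {:F}).

Definition regmx (y : F) : 'M[rat]_n := coordmx ( *%R y).

Lemma regmx_is_linear : linear regmx.
Proof.
move=> r y z; apply/matrixP => i j.
rewrite [LHS]coordmxE mxE [_ (r *: _) i j]mxE !coordmxE.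
by rewrite mulrDl -scalerAl linearD linearZ.
Qed.

HB.instance Definition _ := GRing.isLinear.Build rat F 'M[rat]_n *:%R regmx
  regmx_is_linear.

Lemma regmx1 : regmx 1 = 1%:M.
Proof.
apply/matrixP => i j; rewrite coordmxE mul1r coord_free ?mxE //.
exact: basis_free (vbasisP fullv).
Qed.

Lemma regmxM y z : regmx (y * z) = regmx z *m regmx y.
Proof.
rewrite /regmx -(coordmx_comp _ (y \*o idfun)).
by apply: eq_coordmx => x /=; rewrite mulrA.
Qed.

Lemma regmx_cotrig : exists2 P : 'M[algC]_n, P \in unitmx &
  forall y, is_trig_mx (conjmx P (map_mx ratC (regmx y))).
Proof.
have [|P P_unitary /allP trigP] :=
  @cotrigonalization _ _ [seq map_mx ratC (regmx e`_k) | k : 'I_n <- enum 'I_n].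
  move=> _ _ /mapP[k _ ->] /mapP[l _ ->].
  by rewrite /comm_mx -!map_mxM -!regmxM mulrC.
exists P => [|y]; first exact: unitarymx_unit.
apply/is_trig_mxP => i j lt_ij.
rewrite (coord_vbasis (memvf y)) linear_sum /= map_mx_sum.
rewrite /conjmx mulmx_sumr mulmx_suml summxE big1 // => k _.
have /is_trig_mxP/(_ i j lt_ij) := trigP _ (map_f _ (mem_enum _ k)).
move=> zero_ij; rewrite linearZ /= map_mxZ -scalemxAr -scalemxAl mxE.
by rewrite zero_ij mulr0.
Qed.

Section DiagonalEmbedding.
Variable P : 'M[algC]_n.
Hypotheses (P_unit : P \in unitmx)
  (P_trig : forall y, is_trig_mx (conjmx P (map_mx ratC (regmx y)))).
Variable i : 'I_n.

Definition diag_embedding (y : F) : algC := conjmx P (map_mx ratC (regmx y)) i i.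

Lemma diag_embedding_is_zmod : zmod_morphism diag_embedding.
Proof.
have mxBE (A B : 'M[algC]_n) : (A - B) i i = A i i - B i i by rewrite !mxE.
by move=> y z; rewrite /diag_embedding raddfB map_mxB /conjmx mulmxBr mulmxBl mxBE.
Qed.

Lemma diag_embedding_is_monoid : monoid_morphism diag_embedding.
Proof.
split=> [|y z]; rewrite /diag_embedding.
  by rewrite regmx1 map_scalar_mx rmorph1 conjumx // mulmx1 mulmxV // mxE eqxx.
rewrite mulrC regmxM map_mxM conjmxM ?inE ?stablemx_unit //.
exact: trig_mulmx_diag.
Qed.

End DiagonalEmbedding.

Lemma trace_regmx_embeddings : exists chi : 'I_n -> {rmorphism F -> algC},
  forall y, ratC (\tr (regmx y)) = \sum_i chi i y.
Proof.
have [P P_unit P_trig] := regmx_cotrig.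
exists (fun i => HB.pack_for {rmorphism F -> algC} (diag_embedding P i)
  (GRing.isZmodMorphism.Build _ _ _ (diag_embedding_is_zmod P i))
  (GRing.isMonoidMorphism.Build _ _ _ (diag_embedding_is_monoid P_unit P_trig i))).
move=> y; rewrite -trace_map_mx /= -[RHS]/(\tr (conjmx P _)).
by rewrite conjumx // mxtrace_mulC mulKmx.
Qed.

Lemma vtrace_mul_gt0 (y : F) :
  (forall chi : {rmorphism F -> algC}, 0 < chi y) -> 0 < vtrace ( *%R y).
Proof.
move=> chi_y_gt0; have [chi trE] := trace_regmx_embeddings.
rewrite -(ltr_rat algC) rmorph0 [ratr _]trE lt0r sumr_ge0 ?andbT; last first.
  by move=> i _; exact/ltW/chi_y_gt0.
rewrite psumr_neq0; last by move=> i _; exact/ltW/chi_y_gt0.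
by apply/hasP; exists (Ordinal (adim_gt0 {:F})); rewrite ?mem_index_enum ?chi_y_gt0.
Qed.

End RegularRepresentation.

Section QuaternionTrace.
Variables (F : fieldExtType rat) (a b : F).

Lemma scale_quat (r : rat) (x0 x1 x2 x3 : F) :
  r *: ((x0, x1, x2, x3) : quat F) = (r%:A * x0, r%:A * x1, r%:A * x2, r%:A * x3).
Proof. by rewrite !mulr_algl. Qed.

Lemma add_quat (x0 x1 x2 x3 y0 y1 y2 y3 : F) :
  ((x0, x1, x2, x3) : quat F) + (y0, y1, y2, y3) =
  (x0 + y0, x1 + y1, x2 + y2, x3 + y3).
Proof. by []. Qed.

Definition qcoord (k : 'I_4) (x : quat F) : F :=
  let: (x0, x1, x2, x3) := x in [:: x0; x1; x2; x3]`_k.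

Definition qunit (k : 'I_4) (z : F) : quat F :=
  (if k == 0 :> nat then z else 0, if k == 1 :> nat then z else 0,
   if k == 2 :> nat then z else 0, if k == 3 :> nat then z else 0).

Lemma qcoord_is_linear k : linear (qcoord k).
Proof. by move=> r [[[? ?] ?] ?] [[[? ?] ?] ?]; case: k => [[|[|[|[|]]]] ?]. Qed.

Lemma qunit_is_linear k : linear (qunit k).
Proof.
move=> r z w; rewrite /qunit scale_quat add_quat.
by case: k => [[|[|[|[|]]]] ?] //=; rewrite !mulr0 !addr0 mulr_algl.
Qed.

Lemma qmul_is_linear c : linear (qmul a b c).
Proof.
move=> r [[[y0 y1] y2] y3] [[[z0 z1] z2] z3]; case: c => [[[c0 c1] c2] c3].
rewrite scale_quat add_quat /= scale_quat add_quat.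
by congr (_, _, _, _); ring.
Qed.

HB.instance Definition _ k := GRing.isLinear.Build rat (quat F) F *:%R (qcoord k)
  (qcoord_is_linear k).
HB.instance Definition _ k := GRing.isLinear.Build rat F (quat F) *:%R (qunit k)
  (qunit_is_linear k).
HB.instance Definition _ c := GRing.isLinear.Build rat (quat F) (quat F) *:%R
  (qmul a b c) (qmul_is_linear c).

Lemma quat_decomp x : x = \sum_k qunit k (qcoord k x).
Proof.
case: x => [[[x0 x1] x2] x3]; rewrite !big_ord_recl big_ord0 addr0 /qunit /=.
by rewrite !add_quat !addr0 !add0r.
Qed.

Lemma qcoord_qmul_qunit c k z : qcoord k (qmul a b c (qunit k z)) = c.1.1.1 * z.
Proof. by case: c => [[[c0 c1] c2] c3]; case: k => [[|[|[|[|]]]] ?] //=; ring. Qed.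

(* With L the left multiplication by c, L = sum_k (L o qunit k) o qcoord k, and
   Tr((L o qunit k) o qcoord k) = Tr(qcoord k o L o qunit k) = Tr_{F/Q}(c0). *)
Lemma qtraceE c : qtrace a b c = vtrace ( *%R c.1.1.1) *+ 4.
Proof.
have qmul_decomp x : qmul a b c x = \sum_k qmul a b c (qunit k (qcoord k x)).
  by rewrite {1}[x]quat_decomp linear_sum.
rewrite -[LHS]/(vtrace (qmul a b c)) (eq_vtrace qmul_decomp).
rewrite vtrace_sum -[in RHS](card_ord 4) -sumr_const; apply: eq_bigr => k _.
rewrite -[LHS]/(vtrace ((qmul a b c \o qunit k) \o qcoord k)) vtrace_comp.
by apply: eq_vtrace => z /=; rewrite qcoord_qmul_qunit.
Qed.

End QuaternionTrace.

Lemma real_wsqr_sum_gt0 (R : numDomainType) (u w x0 x1 x2 x3 : R) :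
  0 < u -> 0 < w -> x0 \is Num.real -> x1 \is Num.real ->
  x2 \is Num.real -> x3 \is Num.real ->
  (0 < x0 ^+ 2 + u * x1 ^+ 2 + w * (x2 ^+ 2 + u * x3 ^+ 2)) =
  [|| x0 != 0, x1 != 0, x2 != 0 | x3 != 0].
Proof.
move=> u_gt0 w_gt0 x0R x1R x2R x3R.
have sqr_ge0 (z : R) : z \is Num.real -> 0 <= z ^+ 2.
  by move=> zR; exact: real_exprn_even_ge0.
have u_sqr_ge0 z : z \is Num.real -> 0 <= u * z ^+ 2.
  by move=> zR; rewrite mulr_ge0 ?sqr_ge0 ?ltW.
have ge0_0 := sqr_ge0 _ x0R; have ge0_1 := u_sqr_ge0 _ x1R.
have ge0_23 := addr_ge0 (sqr_ge0 _ x2R) (u_sqr_ge0 _ x3R).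
have ge0_w23 := mulr_ge0 (ltW w_gt0) ge0_23.
rewrite lt0r !addr_ge0 // andbT !paddr_eq0 ?addr_ge0 //.
rewrite (mulf_eq0 w) (gt_eqF w_gt0) paddr_eq0 ?sqr_ge0 ?u_sqr_ge0 //.
by rewrite !(mulf_eq0 u) (gt_eqF u_gt0) !sqrf_eq0 !negb_and -!orbA.
Qed.

Section Involution.
Variables (F : fieldExtType rat) (a b t : F).
Hypothesis d_neq0 : 1 - b * t ^+ 2 != 0.
Local Notation d := (1 - b * t ^+ 2).

(* x |-> mu^-1 x' mu for mu = i + t ij; a cancels out since mu^-1 = mu / (a d). *)
Definition qphi (x : quat F) : quat F :=
  let: (x0, x1, x2, x3) := x in
  (x0, (2 * b * t * x3 - (1 + b * t ^+ 2) * x1) / d, x2,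
       ((1 + b * t ^+ 2) * x3 - 2 * t * x1) / d).

Lemma qphi1 : qphi qone = qone.
Proof. by rewrite /qphi /qone; congr (_, _, _, _); field. Qed.

Lemma qphiK x : qphi (qphi x) = x.
Proof.
by case: x => [[[x0 x1] x2] x3]; rewrite /qphi /=; congr (_, _, _, _); field.
Qed.

Lemma qphiM x y : qphi (qmul a b x y) = qmul a b (qphi y) (qphi x).
Proof.
case: x => [[[x0 x1] x2] x3]; case: y => [[[y0 y1] y2] y3].
by rewrite /qphi /qmul /=; congr (_, _, _, _); field.
Qed.

Lemma qphi_is_linear : linear qphi.
Proof.
move=> r [[[y0 y1] y2] y3] [[[z0 z1] z2] z3].
rewrite scale_quat add_quat /= scale_quat add_quat.
by congr (_, _, _, _); field.
Qed.

Lemma qphi_anti_involution : anti_involution a b qphi.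
Proof.
by split; [exact: qphi_is_linear | exact: qphi1 | exact: qphiK | exact: qphiM].
Qed.

Lemma qmul_qphi_coord0 x0 x1 x2 x3 :
  (qmul a b (qphi (x0, x1, x2, x3)) (x0, x1, x2, x3)).1.1.1 =
  x0 ^+ 2 + b * x2 ^+ 2 - a / d * ((x1 - b * t * x3) ^+ 2 + b * (x3 - t * x1) ^+ 2).
Proof. by rewrite /qphi /qmul /=; field. Qed.

Hypotheses (F_real : forall (chi : {rmorphism F -> algC}) z, chi z \is Num.real)
  (b_pos : forall chi : {rmorphism F -> algC}, 0 < chi b)
  (ad_neg : forall chi : {rmorphism F -> algC}, chi a * chi d < 0).

Lemma qphi_positive : positive_anti_involution a b qphi.
Proof.
split=> [|[[[x0 x1] x2] x3] x_neq0]; first exact: qphi_anti_involution.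
rewrite qtraceE pmulrn_lgt0 //; apply: vtrace_mul_gt0 => chi.
have chi_ad : 0 < - chi (a / d).
  have chi_d_neq0 : chi d != 0 by rewrite fmorph_eq0.
  have -> : - chi (a / d) = - (chi a * chi d) / chi d ^+ 2.
    move: chi_d_neq0; rewrite fmorph_div !(rmorphB, rmorph1, rmorphM, rmorphXn).
    by move=> ?; field.
  by rewrite divr_gt0 ?oppr_gt0 ?ad_neg // real_exprn_even_gt0 ?F_real.
have -> : chi (qmul a b (qphi (x0, x1, x2, x3)) (x0, x1, x2, x3)).1.1.1 =
    chi x0 ^+ 2 + chi b * chi x2 ^+ 2 +
    - chi (a / d) * (chi (x1 - b * t * x3) ^+ 2 + chi b * chi (x3 - t * x1) ^+ 2).
  by rewrite qmul_qphi_coord0 !(rmorphB, rmorphD, rmorphM, rmorphXn); ring.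
rewrite real_wsqr_sum_gt0 ?F_real ?b_pos // !fmorph_eq0.
apply: contraNT x_neq0; rewrite !negb_or !negbK.
case/and4P=> /eqP-> /eqP-> /eqP e1 /eqP/subr0_eq x3E; apply/eqP.
have /eqP : x1 * d = 0 by rewrite -e1 x3E; ring.
by rewrite mulf_eq0 (negPf d_neq0) orbF x3E => /eqP->; rewrite mulr0.
Qed.

End Involution.

Lemma ratr_real (r : rat) : ratC r \is Num.real.
Proof. exact/Creal_Crat/Crat_rat. Qed.

Lemma ratr_dense (x y : algC) :
  x \is Num.real -> x < y -> exists r : rat, x < ratr r < y.
Proof.
move=> xR lt_xy; pose N := Num.bound (y - x)^-1.
have N_gt0 : (0 : algC) < N%:R by rewrite ltr0n.
have invN_lt : N%:R^-1 < y - x.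
  rewrite -[y - x]invrK ltf_pV2 ?posrE ?invr_gt0 ?subr_gt0 //.
  by rewrite archi_boundP // invr_ge0 subr_ge0 ltW.
pose m := Num.floor (x * N%:R).
exists ((m + 1)%:~R / N%:R); rewrite fmorph_div rmorph_int rmorph_nat.
rewrite ltr_pdivlMr // ltr_pdivrMr // real_floorD1_gt ?rpredM ?realn //=.
apply: (le_lt_trans (y := x * N%:R + 1)).
  by rewrite intrD lerD2r real_floor_le ?rpredM ?realn.
by rewrite -ltrBrDl -mulrBl -ltr_pdivrMr // mul1r.
Qed.

Lemma rat_sqr_dense (L U : rat) : 0 <= L -> L < U -> exists k : rat, L < k ^+ 2 < U.
Proof.
move=> L_ge0 lt_LU; have U_ge0 := le_trans L_ge0 (ltW lt_LU).
have nneg_sqrt (r : rat) : 0 <= r -> sqrtC (ratC r) \is Num.nneg.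
  by move=> r_ge0; rewrite nnegrE sqrtC_ge0 ler0q.
have lt_sqrt : sqrtC (ratC L) < sqrtC (ratC U).
  by rewrite ltr_sqrtC ?nnegrE ?ler0q ?ltr_rat.
have [k /andP[lo hi]] := ratr_dense (ger0_real (nneg_sqrt L L_ge0)) lt_sqrt.
have k_nneg : ratC k \is Num.nneg.
  by rewrite nnegrE (le_trans _ (ltW lo)) ?sqrtC_ge0 ?ler0q.
exists k; rewrite -!(ltr_rat algC) rmorphXn -[ratC L]sqrtCK -[ratC U]sqrtCK.
by rewrite !ltr_sqr ?nneg_sqrt ?lo.
Qed.

Lemma real_mul_subr_lt0 (R : numDomainType) (w z : R) :
  w \is Num.real -> z \is Num.real -> `|z| < `|w| -> w * (z - w) < 0.
Proof.
move=> wR zR lt_zw; have w_gt0 : 0 < `|w| by apply: le_lt_trans lt_zw.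
rewrite mulrBr subr_lt0 (le_lt_trans (real_ler_norm (rpredM wR zR))) //.
by rewrite -expr2 -real_normK // expr2 normrM ltr_pM2l.
Qed.

Lemma exists_rat_gap (l : seq algC) (c : rat) : 0 < c -> exists2 e : rat, 0 < e < c &
  forall v, v \in l -> v \is Num.real -> v != ratr c -> ratr e <= `|v - ratr c|.
Proof.
move=> c_gt0; elim: l => [|v l [e /andP[e_gt0 e_lt_c] e_gap]].
  by exists (c / 2%:R) => //; rewrite divr_gt0 //= ltr_pdivrMr // ltr_pMr.
have [v_sep | v_nsep] := boolP ((v \is Num.real) && (v != ratr c)); last first.
  exists e; first by rewrite e_gt0.
  move=> w; rewrite inE => /predU1P[-> wR w_neq|]; last exact: e_gap.
  by rewrite wR w_neq in v_nsep.
case/andP: v_sep => vR v_neq.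
have [|r /andP[r_gt0 r_lt]] := @ratr_dense 0 `|v - ratr c| (real0 _).
  by rewrite normr_gt0 subr_eq0.
rewrite ltr0q in r_gt0.
exists (Num.min e r); first by rewrite lt_min e_gt0 r_gt0 gt_min e_lt_c.
move=> w; rewrite inE => /predU1P[-> _ _|w_l wR w_neq].
  by rewrite (le_trans _ (ltW r_lt)) // ler_rat ge_min lexx orbT.
by rewrite (le_trans _ (e_gap w w_l wR w_neq)) // ler_rat ge_min lexx.
Qed.

(* The sign condition holds as soon as |1/(p s^2) - c| < |v - c| for all v. *)
Lemma exists_separating_square (l : seq algC) (p c : rat) : 0 < p -> 0 < c ->
  exists s : rat, forall v, v \in l -> v \is Num.real -> v != ratr c ->
    (v - ratr c) * (1 - ratr (p * s ^+ 2) * v) < 0.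
Proof.
move=> p_gt0 c_gt0; have [e /andP[e_gt0 e_lt_c] e_gap] := exists_rat_gap l c_gt0.
have [k /andP[lo hi]] : exists k : rat, p * (c - e) < k ^+ 2 < p * (c + e).
  by apply: rat_sqr_dense; nra.
have k_neq0 : k != 0 by apply: contraTneq lo => ->; nra.
pose T := k ^+ 2 / p.
have T_near : `|T - c| < e.
  have T_gt : c - e < T by rewrite ltr_pdivlMr // mulrC.
  have T_lt : T < c + e by rewrite ltr_pdivrMr // mulrC.
  by rewrite ltr_norml; apply/andP; split; lra.
exists k^-1 => v vl vR v_neq.
have q_gt0 : 0 < p * k^-1 ^+ 2 by rewrite mulr_gt0 // exprn_even_gt0 //= invr_eq0.
have qT : p * k^-1 ^+ 2 * T = 1 by rewrite /T; field; rewrite k_neq0 gt_eqF.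
have -> : 1 - ratC (p * k^-1 ^+ 2) * v = ratC (p * k^-1 ^+ 2) * (ratC T - v).
  by rewrite mulrBr -rmorphM qT rmorph1.
rewrite mulrCA pmulr_rlt0 ?ltr0q //.
have -> : ratC T - v = (ratC T - ratC c) - (v - ratC c) by rewrite opprB addrA subrK.
apply: real_mul_subr_lt0; rewrite ?rpredB ?ratr_real //.
by rewrite -rmorphB -ratr_norm (lt_le_trans _ (e_gap v vl vR v_neq)) ?ltr_rat.
Qed.

Lemma irreducible_poly_no_root (R : idomainType) (q : {poly R}) c :
  irreducible_poly q -> (2 < size q)%N -> ~~ root q c.
Proof.
move=> q_irr q_size; apply/negP => /factor_theorem[r q_eq].
have := q_irr ('X - c%:P); rewrite size_XsubC => /(_ isT).
rewrite q_eq dvdp_mulIr => /(_ isT)/eqp_size.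
by rewrite -q_eq size_XsubC => q_size2; rewrite -q_size2 in q_size.
Qed.

Section TotallyReal.
Variables (P : {poly int}) (gamma : algC) (F : fieldExtType rat)
  (sigma : {rmorphism F -> algC}) (delta a : F).
Hypotheses (P_monic : P \is monic) (P_irr : irreducible_poly P)
  (P_size : (2 < size P)%N)
  (P_roots : forall z : algC, root (map_poly intr P) z -> z \is Num.real \/ `|z| = 1)
  (gamma_root : root (map_poly intr P) gamma) (gamma_norm : `|gamma| = 1)
  (F_gen : <<1%VS; delta>>%VS = fullv) (sigma_delta : sigma delta = gamma + gamma^-1)
  (sigma_a : sigma a = (gamma - gamma^-1) ^+ 2).

Local Notation PC := (map_poly intr P : {poly algC}).

Lemma root_neq0_sqr_neq1 z : root PC z -> z != 0 /\ z ^+ 2 != 1.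
Proof.
have no_int_root (c : int) : ~~ root PC c%:~R.
  by rewrite /root horner_map intr_eq0 -rootE irreducible_poly_no_root.
move=> z_root; split; first by apply: contraTneq z_root => ->; exact: (no_int_root 0).
rewrite sqrf_eq1; apply: contraTN z_root => /orP[] /eqP->.
  exact: (no_int_root 1).
exact: (no_int_root (-1)).
Qed.

Lemma gamma_neq0 : gamma != 0. Proof. by case: (root_neq0_sqr_neq1 gamma_root). Qed.

Lemma root_gamma_inv : root PC gamma^-1.
Proof.
have PC_conj : map_poly Num.conj PC = PC.
  by rewrite -map_poly_comp; apply: eq_map_poly => x /=; rewrite rmorph_int.
rewrite invC_norm gamma_norm expr1n invr1 mul1r.
by rewrite /root -PC_conj horner_map (rootP gamma_root) rmorph0.
Qed.

Lemma gamma_neq_inv : gamma != gamma^-1.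
Proof.
apply: contraNneq (proj2 (root_neq0_sqr_neq1 gamma_root)) => gamma_eq.
by rewrite expr2 {2}gamma_eq mulfV ?gamma_neq0.
Qed.

(* X^2 - delta X + 1 divides P over F, because its image under sigma is
   (X - gamma)(X - gamma^-1); so chi delta = tau + tau^-1 for a root tau of its
   image under chi. *)
Lemma embedding_delta (chi : {rmorphism F -> algC}) :
  exists2 tau, root PC tau & chi delta = tau + tau^-1.
Proof.
pose D : {poly F} := 'X^2 - delta *: 'X + 1.
have map_D (f : {rmorphism F -> algC}) : map_poly f D = 'X^2 - f delta *: 'X + 1.
  by rewrite rmorphD rmorphB /= map_polyXn map_polyZ map_polyX rmorph1.
have map_P (f : {rmorphism F -> algC}) : map_poly f (map_poly intr P) = PC.
  by rewrite -map_poly_comp; apply: eq_map_poly => x /=; rewrite rmorph_int.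
have D_dvd : D %| map_poly intr P.
  have sigma_D : map_poly sigma D = \prod_(z <- [:: gamma; gamma^-1]) ('X - z%:P).
    have quad (x g h : {poly algC}) : (x - g) * (x - h) = x ^+ 2 - (g + h) * x + g * h.
      by ring.
    rewrite big_cons big_seq1 quad map_D sigma_delta -polyCM mulfV ?gamma_neq0 //.
    by rewrite -polyCD mul_polyC polyC1.
  rewrite -(dvdp_map sigma) map_P sigma_D.
  apply: uniq_roots_dvdp; last by rewrite uniq_rootsE /= inE gamma_neq_inv.
  by rewrite /= gamma_root root_gamma_inv.
have [tau tau_root] : exists tau, root (map_poly chi D) tau.
  apply/closed_rootP; rewrite map_D -addrA size_addl size_polyXn //.
  rewrite (leq_ltn_trans (size_add _ _)) // gtn_max size_poly1 andbT.
  by rewrite size_polyN (leq_ltn_trans (size_scale_leq _ _)) // size_polyX.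
exists tau; first by rewrite -(map_P chi) (root_dvdp _ tau_root) ?dvdp_map.
move: tau_root; rewrite map_D /root !hornerE => /eqP tau_eq.
have tau_neq0 : tau != 0.
  by apply: contra_eq_neq tau_eq => ->; rewrite expr0n mulr0 subrr add0r oner_neq0.
apply: (mulIf tau_neq0); rewrite mulrDl mulVf //; apply/eqP.
by rewrite -subr_eq0 -oppr_eq0 -tau_eq; apply/eqP; ring.
Qed.

Lemma root_trace_real tau : root PC tau -> tau + tau^-1 \is Num.real.
Proof.
case/P_roots => [tau_real | tau_norm]; first by rewrite rpredD ?rpredV.
by rewrite invC_norm tau_norm expr1n invr1 mul1r CrealE rmorphD /= conjCK addrC.
Qed.

Lemma root_trace_sqr_neq4 tau : root PC tau -> (tau + tau^-1) ^+ 2 != 4%:R.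
Proof.
case/root_neq0_sqr_neq1 => tau_neq0 tau_sqr_neq1.
have -> : (tau + tau^-1) ^+ 2 = (tau - tau^-1) ^+ 2 + 4%:R by field.
rewrite -subr_eq0 addrK sqrf_eq0 subr_eq0.
by apply: contra tau_sqr_neq1 => /eqP tau_eq; rewrite expr2 {2}tau_eq mulfV.
Qed.

Lemma embedding_delta_sqr_spec :
  exists l : seq algC, forall chi : {rmorphism F -> algC},
  [/\ chi delta ^+ 2 \in l, chi delta ^+ 2 \is Num.real & chi delta ^+ 2 != 4%:R].
Proof.
have [rs PC_eq] := closed_field_poly_normal PC.
exists [seq (tau + tau^-1) ^+ 2 | tau <- rs] => chi.
have [tau tau_root ->] := embedding_delta chi.
split; [apply: map_f | exact/rpredX/root_trace_real | exact: root_trace_sqr_neq4].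
by rewrite PC_eq (monicP (monic_map _ P_monic)) scale1r root_prod_XsubC in tau_root.
Qed.

Lemma a_eq_delta : a = delta ^+ 2 - 4%:R.
Proof.
apply: (fmorph_inj sigma); rewrite sigma_a rmorphB rmorphXn sigma_delta rmorph_nat.
by field; exact: gamma_neq0.
Qed.

Lemma embedding_real (chi : {rmorphism F -> algC}) z : chi z \is Num.real.
Proof.
have z_in : z \in <<1%VS; delta>>%VS by rewrite F_gen memvf.
rewrite -(Fadjoin_poly_eq z_in) -horner_map.
have [tau tau_root ->] := embedding_delta chi.
apply: rpred_horner; last exact: root_trace_real.
apply/polyOverP => i; rewrite coef_map /=.
have /polyOverP/(_ i)/vlineP[r ->] := Fadjoin_polyOver 1%VS delta z.
by rewrite alg_num_field fmorph_rat ratr_real.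
Qed.

End TotallyReal.

Theorem mainTheorem9 (P : {poly int}) (gamma : algC)
    (F : fieldExtType rat) (sigma : {rmorphism F -> algC}) (delta a : F)
    (p : nat) :
  P \is monic -> irreducible_poly P -> (2 < size P)%N ->
  (forall z : algC, root (map_poly intr P) z -> z \is Num.real \/ `|z| = 1) ->
  (exists z : algC, root (map_poly intr P) z /\ `|z| = 1) ->
  root (map_poly intr P) gamma -> `|gamma| = 1 ->
  <<1%VS; delta>>%VS = fullv -> sigma delta = gamma + gamma^-1 ->
  sigma a = (gamma - gamma^-1) ^+ 2 ->
  prime p -> quat_division a p%:R ->
  exists phi : quat F -> quat F, positive_anti_involution a p%:R phi.
Proof.
(* The construction works for any quaternion algebra (a, p / F), division or not. *)
move=> P_monic P_irr P_size P_roots _ gamma_root gamma_norm F_gen sigma_delta sigma_a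
  p_prime _.
have [l delta_sqr_spec] := embedding_delta_sqr_spec P_monic P_irr P_size P_roots
  gamma_root gamma_norm sigma_delta.
have p_gt0 : (0 : rat) < p%:R by rewrite ltr0n prime_gt0.
have [s] := exists_separating_square l p_gt0 (ltr0n _ 4); rewrite rmorph_nat => s_sep.
pose t := ratr s * delta.
have ad_neg (chi : {rmorphism F -> algC}) : chi a * chi (1 - p%:R * t ^+ 2) < 0.
  have [delta_sqr_in delta_sqr_real delta_sqr_neq4] := delta_sqr_spec chi.
  suff -> : chi a * chi (1 - p%:R * t ^+ 2) =
      (chi delta ^+ 2 - 4%:R) * (1 - ratr (p%:R * s ^+ 2) * chi delta ^+ 2).
    exact: s_sep.
  rewrite (a_eq_delta P_irr P_size gamma_root sigma_delta sigma_a).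
  have chi_t : chi t = ratr s * chi delta by rewrite rmorphM fmorph_rat.
  by ring: chi_t.
have d_neq0 : 1 - p%:R * t ^+ 2 != 0.
  by apply: contraTneq (ad_neg sigma) => ->; rewrite rmorph0 mulr0 ltxx.
exists (qphi p%:R t); apply: qphi_positive => // chi.
  exact: (embedding_real P_irr P_size P_roots gamma_root gamma_norm F_gen sigma_delta).
by rewrite rmorph_nat ltr0n prime_gt0.
Qed.
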